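(* For every $k\in\mathbb{N}$, every $v\in V^X$ and every $i\in\Pi$: if $\sup\{\mathrm{Cost}_i(\rho)\mid\rho\in\Lambda^k(v)\}=+\infty$, then there exists a play $\rho\in\Lambda^k(v)$ with $\mathrm{Cost}_i(\rho)=+\infty$.
   Context: Let $\mathcal{G}$ be a quantitative reachability game on an arena $G=(\Pi,V,(V_i)_{i\in\Pi},E)$ (finite player set $\Pi$, finite vertex set $V$ with $|V|\ge2$, $|\Pi|\le|V|$, partition $(V_i)$, every vertex has a successor) with targets $F_i\subseteq V$ and costs $\mathrm{Cost}_i(\rho)=$ least $k$ with $\rho_k\in F_i$ (or $+\infty$); let $v_0\in V$. Extended game: arena $X$ with vertices $V^X=V\times2^\Pi$, edges $((v,I),(v',I'))\in E^X$ iff $(v,v')\in E$ and $I'=I\cup\{i:v'\in F_i\}$, $(v,I)\in V^X_i$ iff $v\in V_i$, targets $F^X_i=\{(v,I):i\in I\}$ with corresponding reachability costs $\mathrm{Cost}_i$; $x_0=(v_0,\{i:v_0\in F_i\})$. $I(u)$ is the second component of $u$. $\mathcal{I}$ is the set of $I$ such that some $(v,I)$ is reachable from $x_0$, $N=|\mathcal{I}|$, and $J_1<\dots<J_N$ is a fixed total order of $\mathcal{I}$ extending the partial order $I<I'$ iff $I\ne I'$ and some $(v',I')$ is reachable from some $(v,I)$. $V^{\ge J_n}=\{(v,J_m):v\in V,m\ge n\}$. Labelings: for $\lambda:V^X\to\mathbb{N}\cup\{+\infty\}$, a play $\rho$ of $X$ is $\lambda$-consistent if $\mathrm{Cost}_i(\rho_{\ge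 n})\le\lambda(\rho_n)$ for all $n$ and $i$ with $\rho_n\in V^X_i$. $\lambda^0(u)=0$ if $u\in V^X_i$ and $i\in I(u)$, else $+\infty$. The update of $\lambda^k$ w.r.t. $V^{\ge J_n}$ keeps values outside $V^{\ge J_n}$ and, for $u\in V^{\ge J_n}\cap V^X_i$, sets $\lambda^{k+1}(u)=0$ if $i\in I(u)$, otherwise $1+\min_{(u,u')\in E^X}\sup\{\mathrm{Cost}_i(\rho):\rho\in\Lambda^k(u')\}$ ($1+(+\infty)=+\infty$). The sequence $(\lambda^k)$ is generated by $n_0=N$, $\lambda^{k+1}=$ update of $\lambda^k$ w.r.t. $V^{\ge J_{n_k}}$, $n_{k+1}=n_k-1$ if $\lambda^{k+1}=\lambda^k$ and $n_k>1$, else $n_{k+1}=n_k$. $\Lambda^k(v)$ denotes the set of $\lambda^k$-consistent plays of $X$ starting at $v$. *)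

From mathcomp Require Import all_boot.
From Stdlib Require Import ClassicalEpsilon.
Set Implicit Arguments. Unset Strict Implicit. Unset Printing Implicit Defensive.

(* N ∪ {+oo}: Some n = n, None = +oo *)
Definition natinf := option nat.

Definition le_inf (a b : natinf) : bool :=
  match a, b with
  | _, None => true
  | None, Some _ => false
  | Some x, Some y => x <= y
  end.

Definition min_inf (a b : natinf) : natinf :=
  match a, b with
  | None, _ => b
  | _, None => a
  | Some x, Some y => Some (minn x y)
  end.

Definition succ_inf (a : natinf) : natinf := omap S a.

(* least upper bound in N ∪ {+oo} of a set (exists and is unique) *)
Definition is_sup_inf (S : natinf -> Prop) (s : natinf) : Prop :=
  (forall x, S x -> le_inf x s) /\
  (forall t, (forall x, S x -> le_inf x t) -> le_inf s t).

Definition sup_inf (S : natinf -> Prop) : natinf :=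
  epsilon (inhabits None) (is_sup_inf S).

Definition first_hit (P : nat -> bool) : natinf :=
  epsilon (inhabits None)
    (fun c => match c with
              | Some k => P k /\ forall j, j < k -> ~~ P j
              | None => forall j, ~~ P j
              end).

Section ExtendedGame.
Variables (Pi V : finType) (owner : V -> Pi) (E : rel V) (F : Pi -> {set V}).

Definition VX := (V * {set Pi})%type.

Definition EX : rel VX := fun u u' =>
  E u.1 u'.1 && (u'.2 == u.2 :|: [set i | u'.1 \in F i]).

Definition x0 (v0 : V) : VX := (v0, [set i | v0 \in F i]).

Definition playX (rho : nat -> VX) : Prop := forall n, EX (rho n) (rho n.+1).

Definition suffix (rho : nat -> VX) (n : nat) : nat -> VX := fun k => rho (n + k).

Definition costX (i : Pi) (rho : nat -> VX) : natinf :=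
  first_hit (fun k => i \in (rho k).2).

Definition labeling := VX -> natinf.

Definition consistent (lam : labeling) (rho : nat -> VX) : Prop :=
  playX rho /\
  forall n i, owner (rho n).1 = i -> le_inf (costX i (suffix rho n)) (lam (rho n)).

Definition Lam (lam : labeling) (v : VX) (rho : nat -> VX) : Prop :=
  consistent lam rho /\ rho 0 = v.

Definition lambda0 : labeling := fun u =>
  if owner u.1 \in u.2 then Some 0 else None.

(* J : the fixed ordering J_1 < ... < J_N as a sequence (J_n = nth set0 J n.-1) *)
Variable J : seq {set Pi}.

Definition in_geq (n : nat) (u : VX) : bool :=
  [exists m : 'I_(size J).+1, (n <= m) && (0 < m) && (u.2 == nth set0 J (val m).-1)].

Definition sup_cost (lam : labeling) (i : Pi) (v : VX) : natinf :=
  sup_inf (fun c => exists rho, Lam lam v rho /\ costX i rho = c).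

Definition update (lam : labeling) (n : nat) : labeling := fun u =>
  if in_geq n u then
    let i := owner u.1 in
    if i \in u.2 then Some 0
    else succ_inf (\big[min_inf/None]_(u' | EX u u') sup_cost lam i u')
  else lam u.

Fixpoint lamseq (k : nat) : labeling * nat :=
  match k with
  | 0 => (lambda0, size J)
  | k.+1 =>
      let: (lam, n) := lamseq k in
      let lam' := update lam n in
      (lam', if [forall u, lam' u == lam u] && (1 < n) then n.-1 else n)
  end.

Definition lambda_k (k : nat) : labeling := (lamseq k).1.

Definition valid_order (v0 : V) : Prop :=
  uniq J /\
  (forall I, I \in J <-> exists v, connect EX (x0 v0) (v, I)) /\
  (forall I I', I \in J -> I' \in J -> I != I' ->
     (exists v v', connect EX (v, I) (v', I')) -> index I J < index I' J).

End ExtendedGame.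

From Pilot Require Import Defs.
From mathcomp Require Import all_boot.
From Stdlib Require Import ClassicalEpsilon Classical.
Set Implicit Arguments. Unset Strict Implicit. Unset Printing Implicit Defensive.

(* A compactness argument (König's lemma). If the supremum of the costs is
   infinite, then for every m some lam-consistent play from v avoids the
   target of i during its first m steps. The extended arena is finite, so a
   branch can be chosen vertex by vertex such that each of its prefixes
   extends to such plays for every m. Starting at v, following the edges,
   respecting a finite label and avoiding the target up to a given step are
   all decided on finite prefixes, so the branch itself is a lam-consistent
   play from v that never reaches the target.
   Nothing specific to lambda^k or to the arena hypotheses is used. *)

Lemma le_inf_trans (a b c : natinf) : le_inf a b -> le_inf b c -> le_inf a c.
Proof. by case: a b c => [a|] [b|] [c|] //=; apply: leq_trans. Qed.

Lemma first_hit_spec (P : nat -> bool) :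
  match first_hit P with
  | Some k => P k /\ forall j, j < k -> ~~ P j
  | None => forall j, ~~ P j
  end.
Proof.
rewrite /first_hit; set spec := (X in epsilon _ X).
change (spec (epsilon (inhabits None) spec)); apply: epsilon_spec.
have [[k Pk] | never] := classic (exists k, P k).
  exists (Some (ex_minn (ex_intro _ k Pk))).
  case: ex_minnP => m Pm min_m; split=> // j lt_jm.
  by apply/negP => /min_m; rewrite leqNgt lt_jm.
by exists None => j; apply/negP => Pj; apply: never; exists j.
Qed.

Lemma le_first_hit (P : nat -> bool) d : P d -> le_inf (first_hit P) (Some d).
Proof.
move=> Pd; have := first_hit_spec P; case: first_hit => [k [_ min_k] | never] /=.
  by rewrite leqNgt; apply/negP => /min_k; rewrite Pd.
by have := never d; rewrite Pd.
Qed.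

Lemma first_hit_None (P : nat -> bool) : (forall j, ~~ P j) -> first_hit P = None.
Proof.
move=> never; have := first_hit_spec P; case: first_hit => // k [Pk _].
by have := never k; rewrite Pk.
Qed.

Lemma first_hit_le_mono (P Q : nat -> bool) c :
  (forall j, j <= c -> P j -> Q j) ->
  le_inf (first_hit P) (Some c) -> le_inf (first_hit Q) (Some c).
Proof.
move=> PQ; have := first_hit_spec P; case: first_hit => // d [Pd _] /= le_dc.
have := le_first_hit (PQ d le_dc Pd); case: first_hit => //= e le_ed.
exact: leq_trans le_ed le_dc.
Qed.

Lemma is_sup_inf_bounded (S : natinf -> Prop) m :
  (forall x, S x -> le_inf x (Some m)) -> exists s, is_sup_inf S s.
Proof.
elim: m => [|m IHm] ub_m.
  by exists (Some 0); split=> // -[t|].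
have [ub_m' | not_ub_m] := classic (forall x, S x -> le_inf x (Some m)).
  exact: IHm.
exists (Some m.+1); split=> // -[t|] // ub_t /=.
rewrite ltnNge; apply/negP => le_tm; apply: not_ub_m => x Sx.
by have := ub_t x Sx; case: x {Sx} => //= x le_xt; apply: leq_trans le_xt le_tm.
Qed.

Lemma sup_inf_le (S : natinf -> Prop) m :
  (forall x, S x -> le_inf x (Some m)) -> le_inf (sup_inf S) (Some m).
Proof.
move=> ub_m; have [_ least] := epsilon_spec (inhabits None) _ (is_sup_inf_bounded ub_m).
exact: least.
Qed.

Section Koenig.
Variables (T : finType) (A : nat -> (nat -> T) -> Prop).
Hypothesis A_antitone : forall m m' rho, m <= m' -> A m' rho -> A m rho.
Hypothesis A_sat : forall m, exists rho, A m rho.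

Definition extendable (p : seq T) : Prop :=
  forall m, exists2 rho, A m rho & mkseq rho (size p) = p.

Lemma extendable_rcons p : extendable p -> exists x, extendable (rcons p x).
Proof.
move=> ext_p; apply: NNPP => no_x.
(* Each child x fails at some depth mx x; as A is antitone, p fails at depth max mx. *)
have /choice [mx bad] : forall x, exists m,
    ~ exists2 rho, A m rho & mkseq rho (size (rcons p x)) = rcons p x.
  by move=> x; apply: not_all_ex_not => ext_x; apply: no_x; exists x.
have [rho A_rho pre] := ext_p (\max_x mx x).
apply: (bad (rho (size p))); exists rho.
  by apply: A_antitone A_rho; apply: leq_bigmax.
by rewrite size_rcons mkseqS pre.
Qed.

Lemma inhabited_T : inhabited T.
Proof. by have [rho _] := A_sat 0; exact: inhabits (rho 0). Qed.

Definition next_vertex (p : seq T) : T :=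
  epsilon inhabited_T (fun x => extendable (rcons p x)).

Fixpoint branch (n : nat) : seq T :=
  if n is n'.+1 then rcons (branch n') (next_vertex (branch n')) else [::].

Lemma branch_mkseq n : branch n = mkseq (fun j => next_vertex (branch j)) n.
Proof. by elim: n => // n IH; rewrite mkseqS -IH. Qed.

Lemma extendable_branch n : extendable (branch n).
Proof.
elim: n => [|n ext_n]; last exact: epsilon_spec (extendable_rcons ext_n).
by move=> m; have [rho A_rho] := A_sat m; exists rho.
Qed.

Lemma koenig : exists r : nat -> T,
  forall n m, exists2 rho, A m rho & forall j, j < n -> rho j = r j.
Proof.
exists (fun j => next_vertex (branch j)) => n m.
have [rho A_rho] := extendable_branch n m.
rewrite branch_mkseq size_mkseq => pre; exists rho => // j lt_jn.
by have := congr1 (nth (rho j) ^~ j) pre; rewrite !nth_mkseq.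
Qed.

End Koenig.

Section ConsistentPlays.
Variables (Pi V : finType) (owner : V -> Pi) (E : rel V) (F : Pi -> {set V}).
Variables (lam : labeling Pi V) (v : VX Pi V).

Lemma Lam_closed (r : nat -> VX Pi V) :
  (forall n, exists2 rho, Lam owner E F lam v rho & forall j, j < n -> rho j = r j) ->
  Lam owner E F lam v r.
Proof.
move=> approx; split; [split|].
- move=> n; have [rho [[play_rho _] _] agree] := approx n.+2.
  by rewrite -!agree.
- move=> n i owner_i; case lam_rn: (lam (r n)) => [c|]; last by case: costX.
  have [rho [[_ cons_rho] _] agree] := approx (n + c).+1.
  have rho_n : rho n = r n by rewrite agree // ltnS leq_addr.
  have := cons_rho n i; rewrite rho_n lam_rn => /(_ owner_i).
  apply: first_hit_le_mono => j le_jc.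
  by rewrite /Defs.suffix agree // ltnS leq_add2l.
- by have [rho [_ <-] agree] := approx 1; rewrite agree.
Qed.

Lemma sup_cost_None_avoid i : sup_cost owner E F lam i v = None ->
  forall m, exists2 rho, Lam owner E F lam v rho & forall j, j < m -> i \notin (rho j).2.
Proof.
move=> sup_oo m; apply: NNPP => no_rho.
suff : le_inf (sup_cost owner E F lam i v) (Some m) by rewrite sup_oo.
apply: sup_inf_le => _ [rho [Lam_rho <-]].
have [j lt_jm hit] : exists2 j, j < m & i \in (rho j).2.
  apply: NNPP => no_hit; apply: no_rho; exists rho => // j lt_jm.
  by apply/negP => hit; apply: no_hit; exists j.
have le_jm : le_inf (Some j) (Some m) := ltnW lt_jm.
apply: le_inf_trans le_jm; exact: le_first_hit.
Qed.

Lemma sup_cost_None_witness i : sup_cost owner E F lam i v = None ->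
  exists rho, Lam owner E F lam v rho /\ costX i rho = None.
Proof.
move/sup_cost_None_avoid => avoid.
pose A m rho := Lam owner E F lam v rho /\ forall j, j < m -> i \notin (rho j).2.
have A_antitone m m' rho : m <= m' -> A m' rho -> A m rho.
  move=> le_mm' [Lam_rho miss]; split=> // j lt_jm.
  by apply: miss; exact: leq_trans lt_jm le_mm'.
have A_sat m : exists rho, A m rho by have [rho] := avoid m; exists rho.
have [r approx] := koenig A_antitone A_sat.
exists r; split.
  by apply: Lam_closed => n; have [rho [Lam_rho _] agree] := approx n 0; exists rho.
apply: first_hit_None => j; have [rho [_ miss] agree] := approx j.+1 j.+1.
by rewrite -agree ?miss.
Qed.

End ConsistentPlays.

Theorem proposition2p11 (Pi V : finType) (owner : V -> Pi) (E : rel V)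
    (F : Pi -> {set V}) (v0 : V) (J : seq {set Pi}) :
  1 < #|V| -> #|Pi| <= #|V| ->
  (forall v, exists v', E v v') ->
  valid_order E F J v0 ->
  forall (k : nat) (v : VX Pi V) (i : Pi),
    sup_cost owner E F (lambda_k owner E F J k) i v = None ->
    exists rho, Lam owner E F (lambda_k owner E F J k) v rho /\ costX i rho = None.
Proof.
move=> _ _ _ _ k v i; exact: sup_cost_None_witness.
Qed.
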